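(* Let $A$ be the $b\times v$ incidence matrix of a $(v,b,r,k,\lambda)$-BIBD with $k<v$ (rows indexed by blocks, columns by points). Let $\theta\in(0,1)$, $\alpha_1=\theta/r$, $\alpha_2=(1-\theta)/(b-r)$, and let $$Q=\alpha_1A+\alpha_2(J_{b\times v}-A)$$ be the associated transition probability matrix. Put $p^*=\theta$ and $q^*=\alpha_1\lambda+\alpha_2(r-\lambda)$. Assume that $Q$ has rank $v$ and that $p^*\neq q^*$. Define $\gamma_1=\frac{1-q^*}{p^*-q^*}$, $\gamma_2=\frac{-q^*}{p^*-q^*}$ and $$L=\gamma_1A^T+\gamma_2(J_{v\times b}-A^T).$$ Then $L$ equals the Moore–Penrose inverse $Q^+=(Q^TQ)^{-1}Q^T$ of $Q$.
   Context: A $(v,b,r,k,\lambda)$-BIBD is a set system with $v$ points and $b$ blocks, each block of size $k$, each point in exactly $r$ blocks, each pair of distinct points in exactly $\lambda$ blocks. $J_{p\times q}$ is the $p\times q$ all-ones matrix. The matrix $L$ is the unbiased linear estimator associated with the LDP protocol whose transition probability matrix is $Q$ (entry in row $B$, column $x$ is the probability that outcome $x$ is reported as block $B$). For a matrix $Q$ with linearly independent columns, its Moore–Penrose inverse is $(Q^TQ)^{-1}Q^T$. *)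

From HB Require Import structures.
From mathcomp Require Import all_boot all_order all_algebra.
Set Implicit Arguments. Unset Strict Implicit. Unset Printing Implicit Defensive.
Import Order.TTheory GRing.Theory Num.Theory.
Local Open Scope ring_scope.

(* A (v,b,r,k,lambda)-BIBD on points 'I_v with b (indexed, possibly repeated)
   blocks  blk : 'I_b -> {set 'I_v}.  As usual for BIBDs we require v >= 2. *)
Definition is_BIBD (v b r k lam : nat) (blk : 'I_b -> {set 'I_v}) : Prop :=
  [/\ (2 <= v)%N,
      (forall B : 'I_b, #|blk B| = k),
      (forall x : 'I_v, #|[set B : 'I_b | x \in blk B]| = r) &
      (forall x y : 'I_v, x != y ->
          #|[set B : 'I_b | (x \in blk B) && (y \in blk B)]| = lam)].

Definition incidence (R : nzRingType) (v b : nat) (blk : 'I_b -> {set 'I_v})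
  : 'M[R]_(b, v) := \matrix_(B < b, x < v) (x \in blk B)%:R.

(* Moore-Penrose inverse of a matrix with linearly independent columns. *)
Definition mp_inverse (R : fieldType) (m n : nat) (Q : 'M[R]_(m, n)) : 'M[R]_(n, m) :=
  invmx (Q^T *m Q) *m Q^T.

From HB Require Import structures.
From mathcomp Require Import all_boot all_order all_algebra.
From mathcomp Require Import ring.
Set Implicit Arguments. Unset Strict Implicit. Unset Printing Implicit Defensive.
Import Order.TTheory GRing.Theory Num.Theory.
Local Open Scope ring_scope.

(* With J the all-ones matrices, Q = a2 J + (a1 - a2) A and L = g2 J + (g1 - g2) A^T.
   The design identities A^T A = (r - lam) I + lam J, J A = r J and A J = k J make
   L Q a combination of I and J, with coefficients 1 and 0 because a1 r = theta,
   a2 (b - r) = 1 - theta and p* - q* = (a1 - a2) (r - lam); and Q L a combination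
   of J and A A^T, hence symmetric. A left inverse L of Q with Q L symmetric is the
   Moore-Penrose inverse, as L L^T then inverts Q^T Q. The rank hypothesis only
   rules out r = 0, and k < v rules out r = b. *)

Lemma mp_inverse_sym_linv (R : fieldType) m n (Q : 'M[R]_(m, n)) (L : 'M[R]_(n, m)) :
  L *m Q = 1%:M -> (Q *m L)^T = Q *m L -> mp_inverse Q = L.
Proof.
move=> LQ1 QL_sym.
have gram_inv : (Q^T *m Q) *m (L *m L^T) = 1%:M.
  by rewrite -mulmxA (mulmxA Q) -QL_sym !trmx_mul !mulmxA -trmx_mul LQ1 trmx1 mul1mx
             -trmx_mul LQ1 trmx1.
have [gram_unit _] := mulmx1_unit gram_inv.
rewrite /mp_inverse -[invmx _]mulmx1 -gram_inv (mulKmx gram_unit).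
by rewrite -mulmxA -trmx_mul QL_sym mulmxA LQ1 mul1mx.
Qed.

Lemma mulmx_const (R : pzSemiRingType) m n p (a c : R) :
  (const_mx a : 'M_(m, n)) *m (const_mx c : 'M_(n, p)) = const_mx (a * c *+ n).
Proof.
apply/matrixP => i j; rewrite !mxE.
by under eq_bigr do rewrite !mxE; rewrite sumr_const card_ord.
Qed.

Lemma sumr_indicator (R : pzSemiRingType) (T : finType) (P : pred T) :
  \sum_t (P t)%:R = #|[set t | P t]|%:R :> R.
Proof.
by rewrite -sum1dep_card natr_sum [RHS]big_mkcond; apply: eq_bigr => t _; case: (P t).
Qed.

Lemma mxrank_const_le1 (F : fieldType) m n (a : F) : (\rank (const_mx a : 'M_(m, n)) <= 1)%N.
Proof.
have -> : const_mx a = (const_mx a : 'M_(m, 1)) *m (const_mx 1 : 'M_(1, n)).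
  by rewrite mulmx_const mulr1.
exact: leq_trans (mxrankM_maxl _ _) (rank_leq_col _).
Qed.

Section Design.

Variables (v b r k lam : nat) (blk : 'I_b -> {set 'I_v}).
Hypothesis block_size : forall B, #|blk B| = k.
Hypothesis replication : forall x, #|[set B | x \in blk B]| = r.
Hypothesis pair_balance :
  forall x y, x != y -> #|[set B | (x \in blk B) && (y \in blk B)]| = lam.

Lemma replication_lt_blocks : (0 < r)%N -> (k < v)%N -> (r < b)%N.
Proof.
move=> r_gt0 k_lt_v; pose x0 : 'I_v := Ordinal (leq_ltn_trans (leq0n k) k_lt_v).
have r_le_b : (r <= b)%N.
  by rewrite -(replication x0) -[X in (_ <= X)%N]card_ord max_card.
rewrite ltn_neqAle r_le_b andbT; apply/eqP => r_eq_b.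
pose B0 : 'I_b := Ordinal (leq_trans r_gt0 r_le_b).
have all_in x : x \in blk B0.
  have /eqP full : [set B | x \in blk B] == setT.
    by rewrite eqEcard subsetT /= cardsT card_ord replication r_eq_b.
  by have := in_setT B0; rewrite -full inE.
have blk_full : blk B0 = setT by apply/setP => x; rewrite inE all_in.
by have := k_lt_v; rewrite -(block_size B0) blk_full cardsT card_ord ltnn.
Qed.

Variable R : comNzRingType.
Local Notation A := (incidence R blk).

Lemma incidence_eq0 : r = 0%N -> A = 0.
Proof.
move=> r0; apply/matrixP => B x; rewrite !mxE.
by have := replication x; rewrite r0 => /cards0_eq/setP/(_ B); rewrite !inE => ->.
Qed.

Lemma tr_incidence_mul_const n c : A^T *m (const_mx c : 'M_(b, n)) = const_mx (r%:R * c).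
Proof.
apply/matrixP => x j; rewrite !mxE; under eq_bigr do rewrite !mxE.
by rewrite -mulr_suml sumr_indicator replication.
Qed.

Lemma const_mul_incidence m c : (const_mx c : 'M_(m, b)) *m A = const_mx (c * r%:R).
Proof.
apply/matrixP => i x; rewrite !mxE; under eq_bigr do rewrite !mxE.
by rewrite -mulr_sumr sumr_indicator replication.
Qed.

Lemma incidence_mul_const n c : A *m (const_mx c : 'M_(v, n)) = const_mx (k%:R * c).
Proof.
apply/matrixP => B j; rewrite !mxE; under eq_bigr do rewrite !mxE.
by rewrite -mulr_suml sumr_indicator cardsE block_size.
Qed.

Lemma const_mul_tr_incidence m c : (const_mx c : 'M_(m, v)) *m A^T = const_mx (c * k%:R).
Proof.
apply/matrixP => i B; rewrite !mxE; under eq_bigr do rewrite !mxE.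
by rewrite -mulr_sumr sumr_indicator cardsE block_size.
Qed.

Lemma tr_incidence_mul_incidence : A^T *m A = (r%:R - lam%:R)%:M + const_mx lam%:R.
Proof.
apply/matrixP => x y; rewrite !mxE; under eq_bigr do rewrite !mxE -natrM mulnb.
rewrite sumr_indicator; have [<-|x_neq_y] := eqVneq x y.
  by under eq_finset do rewrite andbb; rewrite replication mulr1n subrK.
by rewrite pair_balance // mulr0n add0r.
Qed.

Lemma affine_incidence_mul (c0 c1 d0 d1 : R) :
  (const_mx d0 + d1 *: A^T) *m (const_mx c0 + c1 *: A)
  = const_mx (d0 * c0 *+ b + (d0 * c1 + d1 * c0) * r%:R + d1 * c1 * lam%:R)
    + (d1 * c1 * (r%:R - lam%:R))%:M.
Proof.
rewrite mulmxDl !mulmxDr -!scalemxAl -!scalemxAr mulmx_const const_mul_incidence.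
rewrite tr_incidence_mul_const tr_incidence_mul_incidence.
by apply/matrixP => x y; rewrite !mxE; ring.
Qed.

Lemma affine_incidence_mul_tr_sym (c0 c1 d0 d1 : R) :
  ((const_mx c0 + c1 *: A) *m (const_mx d0 + d1 *: A^T))^T
  = (const_mx c0 + c1 *: A) *m (const_mx d0 + d1 *: A^T).
Proof.
rewrite mulmxDl !mulmxDr -!scalemxAl -!scalemxAr mulmx_const.
rewrite incidence_mul_const const_mul_tr_incidence.
by rewrite !linearD /= !linearZ /= !trmx_const trmx_mul trmxK !scalerA (mulrC c1).
Qed.

End Design.

Theorem mainTheorem3 (R : realFieldType) (v b r k lam : nat)
  (blk : 'I_b -> {set 'I_v}) (theta : R) :
  is_BIBD r k lam blk -> (k < v)%N ->
  0 < theta -> theta < 1 ->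
  let A : 'M[R]_(b, v) := incidence R blk in
  let alpha1 := theta / r%:R in
  let alpha2 := (1 - theta) / (b%:R - r%:R) in
  let Q : 'M[R]_(b, v) := alpha1 *: A + alpha2 *: (const_mx 1 - A) in
  let pstar := theta in
  let qstar := alpha1 * lam%:R + alpha2 * (r%:R - lam%:R) in
  \rank Q = v ->
  pstar != qstar ->
  let gamma1 := (1 - qstar) / (pstar - qstar) in
  let gamma2 := (- qstar) / (pstar - qstar) in
  let L : 'M[R]_(v, b) := gamma1 *: A^T + gamma2 *: (const_mx 1 - A^T) in
  L = mp_inverse Q.
Proof.
move=> [v_ge2 block_size replication pair_balance] k_lt_v _ _
  A a1 a2 Q p q rankQ p_neq_q g1 g2 L.
have QE : Q = const_mx a2 + (a1 - a2) *: A by apply/matrixP => B x; rewrite !mxE; ring.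
have LE : L = const_mx g2 + (g1 - g2) *: A^T by apply/matrixP => x B; rewrite !mxE; ring.
have r_gt0 : (0 < r)%N.
  rewrite lt0n; apply/eqP => r0; suff : (v <= 1)%N by move/(leq_trans v_ge2).
  by rewrite -rankQ QE /A (incidence_eq0 replication _ r0) scaler0 addr0 mxrank_const_le1.
have r_lt_b := replication_lt_blocks block_size replication r_gt0 k_lt_v.
have r_neq0 : r%:R != 0 :> R by rewrite pnatr_eq0 -lt0n.
have b_sub_r_neq0 : b%:R - r%:R != 0 :> R by rewrite subr_eq0 eqr_nat gtn_eqF.
have total_mass : a2 * b%:R + (a1 - a2) * r%:R = 1.
  by rewrite /a1 /a2; field; rewrite r_neq0 b_sub_r_neq0.
have gap : p - q = (a1 - a2) * (r%:R - lam%:R) by rewrite /p /q /a1; field.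
have p_sub_q_neq0 : p - q != 0 by rewrite subr_eq0.
apply/esym/mp_inverse_sym_linv; last by rewrite QE LE (affine_incidence_mul_tr_sym block_size).
rewrite LE QE (affine_incidence_mul replication pair_balance).
have coef_J : g2 * a2 *+ b + (g2 * (a1 - a2) + (g1 - g2) * a2) * r%:R
              + (g1 - g2) * (a1 - a2) * lam%:R = 0.
  transitivity (g2 * (a2 * b%:R + (a1 - a2) * r%:R) + (g1 - g2) * q).
    by rewrite /q; ring.
  by rewrite total_mass /g1 /g2; field.
have coef_I : (g1 - g2) * (a1 - a2) * (r%:R - lam%:R) = 1.
  by rewrite -mulrA -gap /g1 /g2; field.
by rewrite coef_J coef_I raddf0 add0r.
Qed.
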